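(* Let $n,s,t$ be positive integers with $1\le s\le t\le n$, and let $u_1,\dots,u_l,v_1,\dots,v_l$ be positive integers with $\prod_{i=1}^{l}v_i=s$, $u_1=s/v_1$ and $u_i=u_{i-1}/v_i$ for $2\le i\le l$. Then $$r(n;s,t)\ \le\ s\left(\prod_{i=1}^{l}S(n,u_i,v_i)\right) r(n;1,t).$$
   Context: $[m]=\{1,\dots,m\}$. A linear code $\mathcal{C}\subseteq\mathbb{F}^N$ of dimension $n$ is systematic if for every $\mathbf{x}\in\mathbb{F}^n$ there is a unique codeword whose first $n$ coordinates equal $\mathbf{x}$. A set $R\subseteq[N]$ is a recovering set for $i\in[n]$ if there are scalars $\lambda_k$ with $\mathbf{c}(i)=\sum_{k\in R}\lambda_k\mathbf{c}(k)$ for all $\mathbf{c}\in\mathcal{C}$. $(s,t)$-batch code ($1\le s\le t$): a systematic linear code of dimension $n$ such that for every choice of indices $i_1,\dots,i_s\in[n]$ (not necessarily distinct) and nonnegative integers $a_1,\dots,a_s$ with $\sum_j a_j=t$, there exist $t$ pairwise disjoint sets $R_{j,l}\subseteq[N]$ ($j\in[s]$, $l\in[a_j]$), each a recovering set for $i_j$. Redundancy is $N-n$; $r(n;s,t)$ is the minimum redundancy of an $(s,t)$-batch code of dimension $n$ over all finite fields. A $v$-partition of $[n]$ is a partition of $[n]$ into $v$ (possibly empty) sets $P_1,\dots,P_v$; a $uv$-subset $I\subseteq[n]$ is covered by it if $|P_i\cap I|=u$ for all $i$; a collection of $v$-partitions is $u$-complete if every $uv$-subset of $[n]$ is covered by some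 member; $S(n,u,v)$ is the minimum cardinality of a $u$-complete collection of $v$-partitions of $[n]$. *)

From HB Require Import structures.
From mathcomp Require Import all_boot all_order all_algebra.
From Stdlib Require Import ClassicalEpsilon.
Set Implicit Arguments. Unset Strict Implicit. Unset Printing Implicit Defensive.
Import GRing.Theory.

(* Least natural number satisfying P (P m and P k -> m <= k), chosen
   classically; meaningful whenever P is nonempty. *)
Definition isMin (P : nat -> Prop) (m : nat) : Prop :=
  P m /\ forall k, P k -> (m <= k)%N.
Definition min_nat (P : nat -> Prop) : nat :=
  epsilon (inhabits 0%N) (isMin P).

Section BatchCodes.
Local Open Scope ring_scope.
Variables (F : fieldType) (n m : nat).
(* Codes of length N = n + m (so redundancy N - n = m); coordinates 'I_(n+m),
   the first n coordinates are lshift m i for i : 'I_n.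
   The code is the row space of C. *)
Implicit Type C : 'M[F]_(n + m).

Definition in_code C (c : 'rV[F]_(n + m)) : bool := (c <= C)%MS.

Definition code_dim C : nat := \rank C.

Definition systematic C : Prop :=
  forall x : 'rV[F]_n, exists! c : 'rV[F]_(n + m),
    in_code C c /\ forall i : 'I_n, c 0 (lshift m i) = x 0 i.

Definition recovering_set C (R : {set 'I_(n + m)}) (i : 'I_n) : Prop :=
  exists lambda : 'I_(n + m) -> F, forall c, in_code C c ->
    c 0 (lshift m i) = \sum_(k in R) lambda k * c 0 k.

Definition batch_code C (s t : nat) : Prop :=
  [/\ systematic C, code_dim C = n &
    forall (idx : 'I_s -> 'I_n) (a : 'I_s -> nat),
      \sum_(j < s) a j = t ->
      exists R : {j : 'I_s & 'I_(a j)} -> {set 'I_(n + m)},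
        (forall p q, p != q -> [disjoint R p & R q]) /\
        (forall p, recovering_set C (R p) (idx (tag p)))].
End BatchCodes.

Definition batch_achievable (n s t m : nat) : Prop :=
  exists (F : finFieldType) (C : 'M[F]_(n + m)), batch_code C s t.

Definition r_batch (n s t : nat) : nat := min_nat (batch_achievable n s t).

(* v-partitions of [n]: labelled by p : 'I_n -> 'I_v, P_k = p^-1(k) *)
Definition covers (n u v : nat) (p : {ffun 'I_n -> 'I_v}) (I : {set 'I_n}) : bool :=
  [forall k : 'I_v, #|[set x in I | p x == k]| == u].

Definition u_complete (n u v : nat) (Coll : {set {ffun 'I_n -> 'I_v}}) : Prop :=
  forall I : {set 'I_n}, #|I| = (u * v)%N -> exists2 p, p \in Coll & covers u p I.

Definition S_part (n u v : nat) : nat :=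
  min_nat (fun c => exists Coll : {set {ffun 'I_n -> 'I_v}}, u_complete u Coll /\ #|Coll| = c).

(* From a systematic (u, t)-batch code and a u-complete collection of
   v-partitions, build an (uv, t)-batch code: for every part of every partition,
   append the redundancy of the small code applied to the message restricted to
   that part.  The at most uv coordinates of a request lie in a uv-set covered by
   some partition of the collection, so the request splits into v sub-requests,
   each on u coordinates of one part, served by the copy attached to that part;
   copies attached to different parts of one partition share no coordinate.
   Hence r(n; uv, t) <= S(n, u, v) v r(n; u, t), and iterating along
   u_(i-1) = u_i v_i from u_l = 1 gives the bound. *)

From mathcomp Require Import all_boot all_order all_algebra.
From mathcomp Require Import zify.
From Stdlib Require Import ClassicalEpsilon.
Set Implicit Arguments. Unset Strict Implicit. Unset Printing Implicit Defensive.
Import GRing.Theory.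

Lemma min_natP (P : nat -> Prop) k :
  P k -> P (min_nat P) /\ forall j, P j -> min_nat P <= j.
Proof.
move=> Pk; apply: (epsilon_spec (inhabits 0) (isMin P)).
pose b j : bool := excluded_middle_informative (P j).
have bP j : reflect (P j) (b j).
  by rewrite /b; case: excluded_middle_informative => h; constructor.
have [|j /bP Pj jmin] := ex_minnP (P := b); first by exists k; apply/bP.
by exists j; split => // i /bP /jmin.
Qed.

Lemma disjointP (T : finType) (A B : {set T}) :
  reflect (forall x, x \in A -> x \in B -> False) [disjoint A & B].
Proof.
rewrite -setI_eq0; apply: (iffP eqP) => [AB0 x xA xB | AB].
  by have := in_set0 x; rewrite -AB0 inE xA xB.
by apply/setP => x; rewrite !inE; apply/andP => -[/AB]; apply.
Qed.

Lemma split_lshift n m (i : 'I_n) : split (lshift m i) = inl i.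
Proof. exact: (unsplitK (inl i)). Qed.

Lemma split_rshift n m (i : 'I_m) : split (rshift n i) = inr i.
Proof. exact: (unsplitK (inr i)). Qed.

Lemma card_tagged_ord s (a : 'I_s -> nat) :
  #|{: {j : 'I_s & 'I_(a j)}}| = \sum_(j < s) a j.
Proof.
rewrite card_tagged sumnE big_map big_enum.
by apply: eq_bigr => j _; rewrite card_ord.
Qed.

Lemma superset_of_card (T : finType) (A : {set T}) k :
  #|A| <= k <= #|T| -> exists2 B : {set T}, A \subset B & #|B| = k.
Proof.
case/andP => Ak kT; rewrite -(subnKC Ak) in kT *.
elim: (k - #|A|) kT => [|d IH] kT; first by exists A; rewrite ?addn0.
have [|B AB cardB] := IH; first lia.
have /card_gt0P [x] : 0 < #|~: B| by have := cardsC B; lia.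
rewrite inE => xB; exists (x |: B); first exact: subset_trans AB (subsetUr _ _).
by rewrite cardsU1 xB cardB; lia.
Qed.

Section Generators.
Local Open Scope ring_scope.
Variables (F : fieldType) (n m : nat).
Implicit Types (B : 'M[F]_(n, n + m)) (x : 'rV[F]_n).

Definition recovers B (R : {set 'I_(n + m)}) (i : 'I_n) : Prop :=
  exists lambda : 'I_(n + m) -> F,
    forall x, x 0 i = \sum_(k in R) lambda k * (x *m B) 0 k.

Definition serves B (T : finType) (D : {pred T}) (w : T -> 'I_n) : Prop :=
  exists R : T -> {set 'I_(n + m)},
    {in D &, forall p q, p != q -> [disjoint R p & R q]} /\
    {in D, forall p, recovers B (R p) (w p)}.

Definition batch_gen B s t : Prop :=
  forall (idx : 'I_s -> 'I_n) (a : 'I_s -> nat), (\sum_(j < s) a j)%N = t ->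
    serves B predT (fun p : {j : 'I_s & 'I_(a j)} => idx (tag p)).

Lemma mul_sys_lshift B x i :
  lsubmx B = 1%:M -> (x *m B) 0 (lshift m i) = x 0 i.
Proof.
move=> sysB; have := congr1 (fun y : 'rV_n => y 0 i) (mulmx_lsub x B).
by rewrite sysB mulmx1 mxE.
Qed.

Lemma generator_of_batch_code (C : 'M[F]_(n + m)) s t :
  batch_code C s t -> exists2 B, lsubmx B = 1%:M & batch_gen B s t.
Proof.
case=> sysC _ batchC.
have /fin_all_exists [c hc] : forall i : 'I_n, exists c : 'rV_(n + m),
    in_code C c /\ forall j, c 0 (lshift m j) = (delta_mx 0 i : 'rV_n) 0 j.
  by move=> i; have [c [hc _]] := sysC (delta_mx 0 i); exists c.
pose B := \matrix_i c i.
have BC : (B <= C)%MS by apply/row_subP => i; rewrite rowK; case: (hc i).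
have sysB : lsubmx B = 1%:M.
  by apply/matrixP => i j; rewrite !mxE (proj2 (hc i)) !mxE eqxx eq_sym.
exists B => // idx a suma; have [R [Rdisj Rrec]] := batchC idx a suma.
exists R; split=> [p q _ _ | p _]; first exact: Rdisj.
have [lambda hlambda] := Rrec p; exists lambda => x.
by rewrite -(mul_sys_lshift x _ sysB) hlambda //; apply: submx_trans (submxMl x B) BC.
Qed.

Lemma batch_code_of_generator B s t :
  lsubmx B = 1%:M -> batch_gen B s t -> batch_code (col_mx B 0) s t.
Proof.
move=> sysB batchB.
have codeP c : in_code (col_mx B 0) c -> c = lsubmx c *m B.
  case/submxP => y ->; rewrite -[y]hsubmxK mul_row_col mulmx0 addr0.
  by rewrite -mulmx_lsub sysB mulmx1.
have codeB x : in_code (col_mx B 0) (x *m B).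
  have -> : x *m B = row_mx x (0 : 'rV_m) *m col_mx B 0.
    by rewrite mul_row_col mul0mx addr0.
  exact: submxMl.
split.
- move=> x; exists (x *m B); split=> [|c [cC cx]].
    by split=> // i; rewrite mul_sys_lshift.
  rewrite (codeP c cC); congr (_ *m _); apply/rowP => i.
  by rewrite mxE cx.
- apply/eqP; rewrite /code_dim rank_col_mx0 eqn_leq rank_leq_row /=.
  have rankBn : \rank (B *m col_mx 1%:M 0) = n.
    by rewrite -[B]hsubmxK mul_row_col mulmx0 addr0 mulmx1 sysB mxrank1.
  by rewrite -[X in (X <= _)%N]rankBn mxrankM_maxl.
- move=> idx a suma; have [R [Rdisj Rrec]] := batchB idx a suma.
  exists R; split=> [p q pq | p]; first exact: Rdisj.
  have [lambda hlambda] := Rrec p isT; exists lambda => c cC.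
  by rewrite [in LHS](codeP c cC) mul_sys_lshift // hlambda -codeP.
Qed.

Lemma serves_sub B (T : finType) (D D' : {pred T}) w :
  {subset D' <= D} -> serves B D w -> serves B D' w.
Proof.
move=> D'D [R [Rdisj Rrec]]; exists R.
by split=> [p q /D'D Dp /D'D Dq | p /D'D Dp]; [apply: Rdisj | apply: Rrec].
Qed.

Lemma serves_sig B (T : finType) (P : pred T) w :
  serves B predT (fun z : {x | P x} => w (val z)) -> serves B P w.
Proof.
case=> R [Rdisj Rrec].
exists (fun y : T => if insub y is Some z then R z else set0); split.
  move=> y y' Py Py' yy'; rewrite (insubT P Py) (insubT P Py').
  by apply: Rdisj => //; apply: contra yy' => /eqP/(congr1 val) /= ->.
by move=> y Py; rewrite (insubT P Py); apply: Rrec.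
Qed.

Lemma sum_card_fibres (T : finType) (w : T -> 'I_n) (A : {set 'I_n}) :
  (forall z, w z \in A) -> (\sum_(y in A) #|[set z | w z == y]|)%N = #|T|.
Proof.
move=> wA; rewrite -sum1_card (partition_big w (mem A)) //=.
apply: eq_bigr => y _; rewrite -sum1_card; apply: eq_bigl => z.
by rewrite inE.
Qed.

(* An (s, t)-batch generator also serves any request of at most t items taking
   values in a fixed s-set: pad the multiplicities up to t and inject the
   request into the padded one. *)
Lemma batch_gen_serves B t (T : finType) (w : T -> 'I_n) (A : {set 'I_n}) :
  batch_gen B #|A| t -> (forall z, w z \in A) -> (#|T| <= t)%N ->
  serves B predT w.
Proof.
move=> batchB wA cardT.
have [z0 _ | T0] := pickP (@predT T); last first.
  by exists (fun _ => set0); split=> z; have := T0 z.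
pose rk := enum_rank_in (wA z0).
have rkK z : enum_val (rk (w z)) = w z by rewrite enum_rankK_in.
pose fib y := [set z | w z == y].
pose a (j : 'I_#|A|) :=
  (#|fib (enum_val j)| + (if j == rk (w z0) then t - #|T| else 0))%N.
have suma : (\sum_(j < #|A|) a j)%N = t.
  rewrite big_split /= -(big_enum_val (fun y => #|fib y|)) sum_card_fibres //.
  by rewrite -big_mkcond /= big_pred1_eq subnKC.
have [R [Rdisj Rrec]] := batchB enum_val a suma.
have idxP z : (index z (enum (fib (enum_val (rk (w z))))) < a (rk (w z)))%N.
  rewrite /a rkK; apply: leq_trans (leq_addr _ _).
  by rewrite cardE index_mem mem_enum inE.
pose g z := Tagged (fun j => 'I_(a j)) (Ordinal (idxP z)).
exists (fun z => R (g z)); split=> [z z' _ _ zz' | z _]; last first.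
  by have := Rrec (g z) isT; rewrite /= rkK.
apply: Rdisj => //; apply: contra zz' => /eqP gzz'.
have wzz' : w z = w z'.
  by rewrite -[w z]rkK -[w z']rkK; congr enum_val; apply: (congr1 tag gzz').
have := congr1 (fun p => nat_of_ord (tagged p)) gzz'; rewrite /= !rkK wzz'.
have fibz y : y \in fib (w z') -> y \in enum (fib (w z')) by rewrite mem_enum.
move/(congr1 (nth z (enum (fib (w z'))))).
by rewrite !nth_index ?fibz ?inE ?wzz' // => ->.
Qed.

End Generators.

Lemma batch_achievable_of_gen (F : finFieldType) n m (B : 'M[F]_(n, n + m)) s t :
  lsubmx B = (1%:M)%R -> batch_gen B s t -> batch_achievable n s t m.
Proof. by move=> sysB batchB; exists F, (col_mx B 0); apply: batch_code_of_generator. Qed.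

(* Given blocks M b of message coordinates, the block code appends to the
   message, for every block b, the redundancy of the code B applied to the
   message masked to M b. *)
Section BlockCode.
Local Open Scope ring_scope.
Variables (F : fieldType) (n m : nat) (K : finType) (M : K -> {set 'I_n}).
Variables (B : 'M[F]_(n, n + m)).
Hypothesis sysB : lsubmx B = 1%:M.
Implicit Types (x : 'rV[F]_n) (b : K) (R : {set 'I_(n + m)}).
Local Notation N := #|{: K * 'I_m}|.

Definition block_gen : 'M[F]_(n, n + N) := row_mx 1%:M
  (\matrix_(i, j) ((i \in M (enum_val j).1)%:R * B i (rshift n (enum_val j).2))).

Definition mask b x : 'rV[F]_n := \row_i ((i \in M b)%:R * x 0 i).

Definition lift_coord b (k : 'I_(n + m)) : 'I_(n + N) :=
  match split k with
  | inl i => lshift N i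
  | inr r => rshift n (enum_rank (b, r))
  end.

Definition kept b (k : 'I_(n + m)) : bool :=
  if split k is inl i then i \in M b else true.

Definition lift_set b R : {set 'I_(n + N)} :=
  [set lift_coord b k | k in [set k in R | kept b k]].

Definition lift_coef (lambda : 'I_(n + m) -> F) (j : 'I_(n + N)) : F :=
  match split j with
  | inl i => lambda (lshift m i)
  | inr y => lambda (rshift n (enum_val y).2)
  end.

Lemma block_gen_sys : lsubmx block_gen = 1%:M.
Proof. exact: row_mxKl. Qed.

Lemma lift_coord_lshift b i : lift_coord b (lshift m i) = lshift N i.
Proof. by rewrite /lift_coord split_lshift. Qed.

Lemma lift_coord_rshift b r : lift_coord b (rshift n r) = rshift n (enum_rank (b, r)).
Proof. by rewrite /lift_coord split_rshift. Qed.

Lemma lift_coord_inj b : injective (lift_coord b).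
Proof.
move=> k k'; case: (split_ordP k) => [i ->|r ->]; case: (split_ordP k') => [i' ->|r' ->];
  rewrite ?lift_coord_lshift ?lift_coord_rshift => /eqP;
  rewrite ?eq_lshift ?eq_rshift ?eq_lrshift ?eq_rlshift //.
  by move/eqP ->.
by move/eqP/enum_rank_inj => [->].
Qed.

Lemma lift_coefK lambda b k : lift_coef lambda (lift_coord b k) = lambda k.
Proof.
case: (split_ordP k) => [i ->|r ->].
  by rewrite lift_coord_lshift /lift_coef split_lshift.
by rewrite lift_coord_rshift /lift_coef split_rshift enum_rankK.
Qed.

Lemma block_gen_lift_coord b x k :
  kept b k -> (x *m block_gen) 0 (lift_coord b k) = (mask b x *m B) 0 k.
Proof.
case: (split_ordP k) => [i ->|r ->]; rewrite /kept ?split_lshift ?split_rshift.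
  move=> iM; rewrite lift_coord_lshift !mul_sys_lshift ?block_gen_sys //.
  by rewrite mxE iM mul1r.
move=> _; rewrite lift_coord_rshift mul_mx_row row_mxEr !mxE.
by apply: eq_bigr => i _; rewrite !mxE enum_rankK mulrCA mulrA.
Qed.

Lemma mask_not_kept b x k : ~~ kept b k -> (mask b x *m B) 0 k = 0.
Proof.
case: (split_ordP k) => [i ->|r ->]; rewrite /kept ?split_lshift ?split_rshift //.
by move/negbTE => iM; rewrite mul_sys_lshift // mxE iM mul0r.
Qed.

Lemma recovers_lift b R i :
  i \in M b -> recovers B R i -> recovers block_gen (lift_set b R) i.
Proof.
move=> iM [lambda hlambda]; exists (lift_coef lambda) => x.
have := hlambda (mask b x); rewrite mxE iM mul1r => ->.
rewrite /lift_set big_imset /=; last by move=> k k' _ _; apply: lift_coord_inj.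
rewrite (bigID (kept b)) /= [X in _ + X]big1 ?addr0; last first.
  by move=> k /andP[_ notkept]; rewrite mask_not_kept ?mulr0.
apply: eq_big => [k | k /andP[_ kbk]]; first by rewrite inE.
by rewrite lift_coefK block_gen_lift_coord.
Qed.

Lemma lift_set_disjoint b R R' :
  [disjoint R & R'] -> [disjoint lift_set b R & lift_set b R'].
Proof.
move=> RR'; apply/disjointP => _ /imsetP[k kR ->] /imsetP[k' k'R /lift_coord_inj e].
by move: kR k'R; rewrite !inE -e => /andP[kR _] /andP[kR' _]; apply: (disjointP _ _ RR' k).
Qed.

Lemma lift_set_disjoint_blocks b b' R R' : b != b' ->
  (forall i, i \in M b -> i \in M b' -> lshift m i \in R -> lshift m i \in R' -> False) ->
  [disjoint lift_set b R & lift_set b' R'].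
Proof.
move=> bb' RR'; apply/disjointP => _ /imsetP[k kR ->] /imsetP[k' k'R].
move: kR k'R; rewrite !inE.
case: (split_ordP k) => [i ->|r ->]; case: (split_ordP k') => [i' ->|r' ->];
  rewrite /kept ?split_lshift ?split_rshift ?lift_coord_lshift ?lift_coord_rshift;
  move=> /andP[kR kb] /andP[k'R k'b] /eqP;
  rewrite ?eq_lshift ?eq_rshift ?eq_lrshift ?eq_rlshift //.
  by move/eqP => ii'; subst i'; apply: (RR' i).
by move/eqP/enum_rank_inj => [bb _]; rewrite bb eqxx in bb'.
Qed.

Lemma serves_blocks (T : finType) (D : {pred T}) (w : T -> 'I_n) (key : T -> K) :
  {in D &, forall z z', key z != key z' -> [disjoint M (key z) & M (key z')]} ->
  {in D, forall z, w z \in M (key z)} ->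
  (forall b, serves B [pred z in D | key z == b] w) ->
  serves block_gen D w.
Proof.
move=> Mdisj wM /fin_all_exists[R hR].
exists (fun z => lift_set (key z) (R (key z) z)); split=> [z z' Dz Dz' zz' | z Dz].
  have [kzz'|kzz'] := eqVneq (key z) (key z').
    rewrite -kzz'; apply/lift_set_disjoint/(proj1 (hR (key z)));
      by rewrite ?inE /= ?Dz ?Dz' -?kzz' ?eqxx.
  apply: lift_set_disjoint_blocks => // i iM iM' _ _.
  exact: (disjointP _ _ (Mdisj _ _ Dz Dz' kzz') i).
by apply: recovers_lift (wM z Dz) _; apply: (proj2 (hR (key z))); rewrite inE Dz /=.
Qed.

End BlockCode.

Lemma batch_achievable_repetition n s t : exists m, batch_achievable n s t m.
Proof.
pose B : 'M['F_2]_(n, n + n) := (row_mx 1%:M 1%:M)%R.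
have sysB : lsubmx B = (1%:M)%R by rewrite row_mxKl.
have recB i : recovers B [set rshift n i] i.
  by exists (fun _ => 1%R) => x; rewrite big_set1 mul1r mul_mx_row mulmx1 row_mxEr.
pose M (_ : 'I_t) := [set: 'I_n].
exists #|{: 'I_t * 'I_n}|; apply: (batch_achievable_of_gen (block_gen_sys M B)).
move=> idx a suma; rewrite -card_tagged_ord in suma.
pose key z := cast_ord suma (enum_rank z).
exists (fun z => lift_set M (key z) [set rshift n (idx (tag z))]).
split=> [z z' _ _ zz' | z _]; last exact: recovers_lift.
apply: lift_set_disjoint_blocks => [|i _ _]; last by rewrite inE eq_lrshift.
by apply: contra zz' => /eqP/cast_ord_inj/enum_rank_inj ->.
Qed.

Definition partition_blocks n v (Coll : {set {ffun 'I_n -> 'I_v}})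
  (b : 'I_#|Coll| * 'I_v) : {set 'I_n} :=
  [set i | enum_val b.1 i == b.2].
Arguments partition_blocks {n v} Coll b.

Lemma batch_gen_mul (F : fieldType) n m u v t (Coll : {set {ffun 'I_n -> 'I_v}})
  (B : 'M[F]_(n, n + m)) :
  lsubmx B = (1%:M)%R -> batch_gen B u t -> u_complete u Coll -> u * v <= n ->
  batch_gen (block_gen (partition_blocks Coll) B) (u * v) t.
Proof.
move=> sysB batchB completeColl uvn idx a suma.
pose w (z : {j : 'I_(u * v) & 'I_(a j)}) := idx (tag z).
have [I idxI cardI] : exists2 I : {set 'I_n}, [set idx j | j in 'I_(u * v)] \subset I
    & #|I| = u * v.
  apply: superset_of_card; rewrite card_ord uvn andbT.
  by apply: leq_trans (leq_imset_card _ _) _; rewrite card_ord.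
have wI z : w z \in I by apply: (subsetP idxI); apply: imset_f.
have [p pColl cover] := completeColl I cardI.
pose q := enum_rank_in pColl p.
have qK : enum_val q = p := enum_rankK_in pColl pColl.
apply: (serves_blocks (key := fun z => (q, p (w z))) sysB) => [z z' _ _ kzz' | z _ | [q' k]].
- apply/disjointP => i; rewrite !inE /= qK => /eqP pz /eqP pz'.
  by rewrite -pz -pz' eqxx in kzz'.
- by rewrite inE /= qK.
apply: (serves_sub (D := [pred z | p (w z) == k])).
  by move=> z; rewrite !inE /= xpair_eqE => /andP[_].
apply: serves_sig; apply: (batch_gen_serves (t := t) (A := [set y in I | p y == k])).
- by move/forallP: cover => /(_ k) /eqP ->.
- by case=> z /= pz; rewrite inE wI.
- by rewrite -[t]suma -card_tagged_ord card_sig; apply: max_card.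
Qed.

Lemma batch_achievable_mul n u v t m (Coll : {set {ffun 'I_n -> 'I_v}}) :
  u_complete u Coll -> u * v <= n -> batch_achievable n u t m ->
  batch_achievable n (u * v) t (#|Coll| * v * m).
Proof.
move=> completeColl uvn [F [C /generator_of_batch_code[B sysB batchB]]].
have <- : #|{: ('I_#|Coll| * 'I_v) * 'I_m}| = #|Coll| * v * m.
  by rewrite !card_prod !card_ord.
apply: (batch_achievable_of_gen (block_gen_sys (partition_blocks Coll) B)).
exact: batch_gen_mul.
Qed.

Lemma u_complete_setT n u v :
  0 < u -> 0 < v -> u_complete u [set: {ffun 'I_n -> 'I_v}].
Proof.
move=> u0 v0 I cardI.
have [x0 x0I] : exists x0, x0 \in I by apply/card_gt0P; rewrite cardI muln_gt0 u0.
have cardIuv : #|I| = #|{: 'I_u * 'I_v}| by rewrite cardI card_prod !card_ord.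
pose g x := enum_val (cast_ord cardIuv (enum_rank_in x0I x)).
pose h y : 'I_n := enum_val (cast_ord (esym cardIuv) (enum_rank y)).
have gK : {in I, cancel g h}.
  by move=> x xI; rewrite /g /h enum_valK cast_ordK enum_rankK_in.
have hK : cancel h g by move=> y; rewrite /g /h enum_valK_in cast_ordKV enum_rankK.
have hI y : h y \in I by apply: enum_valP.
exists [ffun x => (g x).2]; rewrite ?inE //.
apply/forallP => k; apply/eqP.
have -> : [set x in I | [ffun x => (g x).2] x == k] = [set h (c, k) | c : 'I_u].
  apply/setP => x; rewrite !inE ffunE.
  apply/andP/imsetP => [[xI /eqP gxk] | [c _ ->]]; last by rewrite hK hI.
  by exists (g x).1; rewrite // -gxk -surjective_pairing gK.
by rewrite card_imset ?card_ord // => c c' /(congr1 g); rewrite !hK => -[].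
Qed.

Lemma S_partP n u v : 0 < u -> 0 < v ->
  exists Coll : {set {ffun 'I_n -> 'I_v}}, u_complete u Coll /\ #|Coll| = S_part n u v.
Proof.
move=> u0 v0; rewrite /S_part; set P := (X in min_nat X).
have : P #|[set: {ffun 'I_n -> 'I_v}]|.
  by exists setT; split; first exact: u_complete_setT.
by case/min_natP.
Qed.

Lemma r_batch_mul n u v t : 0 < u -> 0 < v -> u * v <= n ->
  r_batch n (u * v) t <= S_part n u v * v * r_batch n u t.
Proof.
move=> u0 v0 uvn.
have [m0 ach0] := batch_achievable_repetition n u t.
have [Coll [completeColl <-]] := S_partP n u0 v0.
have ach := batch_achievable_mul completeColl uvn (proj1 (min_natP ach0)).
exact: (proj2 (min_natP ach)) _ ach.
Qed.

Lemma prod_nat_gt0 a b (f : nat -> nat) :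
  (forall i, a <= i < b -> 0 < f i) -> 0 < \prod_(a <= i < b) f i.
Proof.
move=> fpos; rewrite big_seq; apply: prodn_cond_gt0 => i.
by rewrite mem_index_iota; apply: fpos.
Qed.

Lemma r_batch_prod n t l (v : nat -> nat) :
  (forall i, 0 < i <= l -> 0 < v i) -> \prod_(1 <= i < l.+1) v i <= n ->
  forall j, j <= l ->
  r_batch n (\prod_(j.+1 <= i < l.+1) v i) t <=
  \prod_(j.+1 <= i < l.+1) (S_part n (\prod_(i.+1 <= k < l.+1) v k) (v i) * v i) *
    r_batch n 1 t.
Proof.
move=> vpos prodn j jl; rewrite -(subKn jl).
elim: (l - j) (leq_subr j l) => [|d IH] dl; first by rewrite subn0 !big_geq ?mul1n.
have e : l - d = (l - d.+1).+1 by lia.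
rewrite e in IH; set i := (l - d.+1).+1 in IH *.
have [i0 il] : 0 < i /\ i < l.+1 by split; lia.
rewrite [X in r_batch _ X _](big_ltn il) (big_ltn il) -mulnA.
apply: leq_trans (leq_mul (leqnn _) (IH (ltnW dl))).
have vi0 : 0 < v i by apply: vpos; lia.
have tail0 : 0 < \prod_(i.+1 <= k < l.+1) v k.
  by apply: prod_nat_gt0 => k ?; apply: vpos; lia.
rewrite [v i * _]mulnC; apply: r_batch_mul => //.
rewrite mulnC -(big_ltn il); apply: leq_trans prodn.
rewrite [X in _ <= X](@big_cat_nat _ _ _ i) //= ?leq_pmull //; last by lia.
by apply: prod_nat_gt0 => k ?; apply: vpos; lia.
Qed.


Lemma u_tail_prod l (u v : nat -> nat) :
  (forall i, 0 < i <= l -> 0 < v i) ->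
  u 1 = \prod_(1 <= i < l.+1) v i %/ v 1 ->
  (forall i, 2 <= i <= l -> u i = u i.-1 %/ v i) ->
  forall i, 0 < i <= l -> u i = \prod_(i.+1 <= k < l.+1) v k.
Proof.
move=> vpos u1 urec; elim=> [//|i IH] /andP[_ il].
have -> : u i.+1 = \prod_(i.+1 <= k < l.+1) v k %/ v i.+1.
  case: i IH il => [_ _ | i IH il]; first exact: u1.
  by rewrite urec ?IH //; lia.
by rewrite big_ltn ?mulKn ?vpos //; lia.
Qed.

Theorem corollary1 (n s t l : nat) (u v : nat -> nat) :
  (1 <= s)%N -> (s <= t)%N -> (t <= n)%N -> (0 < l)%N ->
  (forall i, (1 <= i <= l)%N -> (0 < u i)%N /\ (0 < v i)%N) ->
  (\prod_(1 <= i < l.+1) v i)%N = s ->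
  u 1%N = (s %/ v 1%N)%N ->
  (forall i, (2 <= i <= l)%N -> u i = (u i.-1 %/ v i)%N) ->
  (r_batch n s t <= s * (\prod_(1 <= i < l.+1) S_part n (u i) (v i)) * r_batch n 1 t)%N.
Proof.
move=> _ st tn _ uvpos prodv u1 urec.
have vpos i : 0 < i <= l -> 0 < v i by case/uvpos.
rewrite -prodv in u1.
have uprod := u_tail_prod vpos u1 urec.
rewrite (@eq_big_nat _ _ _ 1 l.+1 _ _ (fun i il => congr1 (S_part n ^~ (v i)) (uprod i il))).
have := r_batch_prod t vpos (leq_trans (leq_trans (eq_leq prodv) st) tn) (leq0n l).
by rewrite big_split /= prodv [s * _]mulnC.
Qed.
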